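(* Let $\Delta\subset\mathbb{R}^n_{\ge0}$ be a Newton polyhedron with a loose edge $E$ with endpoints $a=(a_1,\dots,a_n)$ and $b=(b_1,\dots,b_n)$. If $\min(a_1,b_1)=\dots=\min(a_n,b_n)=0$, then $a$ and $b$ are the only vertices of $\Delta$.
   Context: A Newton polyhedron is the convex hull of $S+\mathbb{R}^n_{\ge0}$ for a nonempty finite set $S\subset\mathbb{Z}^n_{\ge0}$. For $\xi\in\mathbb{R}^n_{\ge0}$, the face $\Delta^\xi=\{a\in\Delta:\langle\xi,a\rangle=\min_{b\in\Delta}\langle\xi,b\rangle\}$; it is compact iff $\xi\in\mathbb{R}^n_{>0}$. Vertices and edges are faces of dimension 0 and 1; a loose edge is a compact edge not contained in any compact face of dimension $\ge2$. *)

From mathcomp Require Import all_boot all_order all_algebra.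
Set Implicit Arguments. Unset Strict Implicit. Unset Printing Implicit Defensive.
Import Order.TTheory GRing.Theory Num.Theory.
Local Open Scope ring_scope.

Section NewtonDefs.
Variables (R : realFieldType) (n : nat).
Notation pt := 'rV[R]_n.

Definition conv_hull (A : pt -> Prop) : pt -> Prop := fun x =>
  exists (m : nat) (p : 'I_m -> pt) (w : 'I_m -> R),
    (forall i, A (p i)) /\ (forall i, 0 <= w i) /\
    \sum_(i < m) w i = 1 /\ x = \sum_(i < m) w i *: p i.

(* S + R^n_{>=0}, for S a finite set of points of Z^n_{>=0} *)
Definition shifted (S : seq 'rV[nat]_n) : pt -> Prop := fun x =>
  exists2 s, s \in S & forall i, ((s 0 i)%:R : R) <= x 0 i.

Definition newton_polyhedron (S : seq 'rV[nat]_n) : pt -> Prop :=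
  conv_hull (shifted S).

Definition dotp (x y : pt) : R := \sum_(i < n) x 0 i * y 0 i.

Definition face_of (D : pt -> Prop) (xi : pt) : pt -> Prop := fun a =>
  D a /\ forall b, D b -> dotp xi a <= dotp xi b.

Definition is_face (D : pt -> Prop) (F : pt -> Prop) : Prop :=
  exists xi : pt, (forall i, 0 <= xi 0 i) /\ (forall x, F x <-> face_of D xi x).

(* compact = bounded (faces are closed subsets of R^n) *)
Definition bounded_set (F : pt -> Prop) : Prop :=
  exists M : R, forall x, F x -> forall i, `|x 0 i| <= M.

Definition is_compact_face (D F : pt -> Prop) : Prop :=
  is_face D F /\ bounded_set F.

(* F contains k+1 affinely independent points, i.e. dim aff(F) >= k *)
Definition affdim_ge (F : pt -> Prop) (k : nat) : Prop :=
  exists p : 'I_k.+1 -> pt, (forall i, F (p i)) /\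
    row_free (\matrix_(i < k) (p (lift ord0 i) - p ord0)).

Definition affdim_eq (F : pt -> Prop) (k : nat) : Prop :=
  affdim_ge F k /\ ~ affdim_ge F k.+1.

Definition is_vertex (D : pt -> Prop) (v : pt) : Prop :=
  exists F, is_face D F /\ affdim_eq F 0 /\ F v.

Definition is_edge (D F : pt -> Prop) : Prop := is_face D F /\ affdim_eq F 1.

Definition is_loose_edge (D E : pt -> Prop) : Prop :=
  is_edge D E /\ bounded_set E /\
  forall G, is_compact_face D G -> affdim_ge G 2 -> ~ (forall x, E x -> G x).

Definition has_endpoints (E : pt -> Prop) (a b : pt) : Prop :=
  a != b /\
  forall x, E x <-> exists2 t : R, 0 <= t <= 1 & x = (1 - t) *: a + t *: b.

End NewtonDefs.

(* Write the loose edge as E = Delta^xi = [a, b].  Boundedness of E forces xi > 0.  As a and b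
   have disjoint supports, <b, a> = 0 < <b, b>, so the weight xi + b exposes a alone, and
   symmetrically for b.  Conversely, every exponent s in S dominates a point of [a, b]: otherwise
   b_j s_i + a_i s_j < a_i b_j for some i, j with a_i, b_j > 0, and tilting xi towards
   eta = b_j e_i + a_i e_j, which is constant on E, until the supporting hyperplane hits a point
   of S yields a compact face of dimension at least 2 containing E.  Hence every nonnegative
   linear form is minimised over Delta at a or at b, and a vertex can only be a or b. *)

From HB Require Import structures.
From mathcomp Require Import all_boot all_order all_algebra.
From mathcomp Require Import ring lra.
Set Implicit Arguments. Unset Strict Implicit. Unset Printing Implicit Defensive.
Import Order.TTheory GRing.Theory Num.Theory.
Local Open Scope ring_scope.

Section Dotp.
Variables (R : realFieldType) (n : nat).
Implicit Types (x y xi eta : 'rV[R]_n).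

Definition nonnegv x := forall i, 0 <= x 0 i.
Definition posv x := forall i, 0 < x 0 i.

Lemma dotpC x y : dotp x y = dotp y x.
Proof. by apply: eq_bigr => i _; rewrite mulrC. Qed.

Fact dotp_is_scalar xi : scalar (dotp xi).
Proof.
move=> c x y; rewrite /dotp mulr_sumr -big_split /=.
by apply: eq_bigr => i _; rewrite !mxE mulrDr mulrCA.
Qed.

HB.instance Definition _ xi :=
  GRing.isLinear.Build R 'rV[R]_n R _ (dotp xi) (dotp_is_scalar xi).

Lemma dotpDl xi eta x : dotp (xi + eta) x = dotp xi x + dotp eta x.
Proof. by rewrite dotpC linearD /= !(dotpC x). Qed.

Lemma dotpZl c xi x : dotp (c *: xi) x = c * dotp xi x.
Proof. by rewrite dotpC linearZ /= dotpC. Qed.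

Lemma dotp_deltal i x : dotp (delta_mx 0 i) x = x 0 i.
Proof.
rewrite /dotp (bigD1 i) //= big1 => [|k /negPf k_neq_i]; last by rewrite mxE k_neq_i mul0r.
by rewrite mxE !eqxx mul1r addr0.
Qed.

Lemma dotp_deltar i x : dotp x (delta_mx 0 i) = x 0 i.
Proof. by rewrite dotpC dotp_deltal. Qed.

Lemma dotp_ge0 xi x : nonnegv xi -> nonnegv x -> 0 <= dotp xi x.
Proof. by move=> xi_ge0 x_ge0; apply: sumr_ge0 => i _; apply: mulr_ge0. Qed.

Lemma ler_dotp xi x y : nonnegv xi -> (forall i, x 0 i <= y 0 i) ->
  dotp xi x <= dotp xi y.
Proof. by move=> xi_ge0 le_xy; apply: ler_sum => i _; apply: ler_wpM2l. Qed.

Lemma dotp_eq0 xi x : posv xi -> nonnegv x -> dotp xi x = 0 -> x = 0.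
Proof.
move=> xi_gt0 x_ge0 /eqP; rewrite psumr_eq0 => [/allP x0|i _]; last first.
  exact: mulr_ge0 (ltW (xi_gt0 i)) (x_ge0 i).
apply/rowP => i; have := x0 i (mem_index_enum i).
by rewrite mxE implyTb mulf_eq0 gt_eqF //= => /eqP.
Qed.

Lemma dotpp_gt0 x : x != 0 -> 0 < dotp x x.
Proof.
move=> x_neq0; have sq_ge0 i : 0 <= x 0 i * x 0 i by rewrite -expr2 sqr_ge0.
rewrite lt_def sumr_ge0 // andbT; apply: contraNneq x_neq0.
move/eqP; rewrite psumr_eq0 // => /allP x0; apply/eqP/rowP => i.
have := x0 i (mem_index_enum i).
by rewrite mxE implyTb -expr2 sqrf_eq0 => /eqP.
Qed.

End Dotp.

Section AffineDim.
Variables (R : realFieldType) (n : nat).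
Implicit Types (F : 'rV[R]_n -> Prop) (x y xi : 'rV[R]_n).

Lemma affdim_eq0_singleton x : affdim_eq (fun y => y = x) 0.
Proof.
split; first by exists (fun _ => x); split=> //; rewrite /row_free -leqn0 rank_leq_row.
case=> p [p_x]; rewrite /row_free.
have -> : \matrix_(i < 1) (p (lift ord0 i) - p ord0) = 0.
  by apply/matrixP => i j; rewrite !mxE !p_x subrr.
by rewrite mxrank0.
Qed.

Lemma affdim_lt1_eq F x y : ~ affdim_ge F 1 -> F x -> F y -> x = y.
Proof.
move=> F_dim Fx Fy; case: (eqVneq x y) => // x_neq_y; case: F_dim.
exists (fun i : 'I_2 => if i == ord0 then x else y); split=> [i|].
  by case: (i == ord0).
rewrite /row_free rank_rV; set M := \matrix_(i < 1) _; suff -> : M != 0 by [].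
apply: contra x_neq_y => /eqP/matrixP M0; apply/eqP/rowP => j.
by have /eqP := M0 0 j; rewrite !mxE /= subr_eq0 => /eqP.
Qed.

Lemma affdim_ge2_separated F xi p0 p1 p2 : F p0 -> F p1 -> F p2 -> p0 != p1 ->
  dotp xi p0 = dotp xi p1 -> dotp xi p0 != dotp xi p2 -> affdim_ge F 2.
Proof.
move=> Fp0 Fp1 Fp2 p01 xi01 xi02.
pose p (i : 'I_3) := match val i with 0 => p0 | 1 => p1 | _ => p2 end.
exists p; split=> [[[|[|[|k]]] lt_k3] //|].
apply: inj_row_free => v v_ker.
have comb : v 0 0 *: (p1 - p0) + v 0 1 *: (p2 - p0) = 0.
  apply/rowP => k; move/rowP/(_ k): v_ker; rewrite !mxE big_ord_recl big_ord1 !mxE.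
  have -> : lift ord0 ord0 = 1 :> 'I_2 by apply: val_inj.
  by have -> : ord0 = 0 :> 'I_2 by apply: val_inj.
have v1 : v 0 1 = 0.
  move/(congr1 (dotp xi)): comb; rewrite linear0 linearD !linearZ !linearB /=.
  rewrite -xi01 subrr mulr0 add0r => /eqP; rewrite mulf_eq0 subr_eq0.
  by rewrite (eq_sym (dotp xi p2)) (negPf xi02) orbF => /eqP.
move: comb; rewrite v1 scale0r addr0 => /eqP; rewrite scaler_eq0 subr_eq0.
rewrite (eq_sym p1) (negPf p01) orbF => /eqP v0; apply/rowP => i; rewrite mxE.
by case: i => [[|[|]]] //= ?; [rewrite -v0 | rewrite -v1]; congr (v 0 _); apply: val_inj.
Qed.

End AffineDim.

Section Segments.
Variables (R : realFieldType) (n : nat).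

Lemma has_endpointsC E (a b : 'rV[R]_n) : has_endpoints E a b -> has_endpoints E b a.
Proof.
case=> a_neq_b Eab; split=> [|x]; first by rewrite eq_sym.
rewrite Eab; split=> -[t /andP[t_ge0 t_le1] ->]; exists (1 - t);
  by [apply/andP; split; lra | rewrite subKr addrC].
Qed.

Lemma has_endpoints_left E (a b : 'rV[R]_n) : has_endpoints E a b -> E a.
Proof.
case=> _ ->; exists 0; first by rewrite lexx ler01.
by rewrite subr0 scale1r scale0r addr0.
Qed.

End Segments.

Lemma seq_min_ratio (T : eqType) (R : realFieldType) (l : seq T) (g h : T -> R) s :
    s \in l -> 0 < h s -> {in l, forall x, 0 <= g x} ->
  exists2 s', s' \in l & 0 < h s' /\ {in l, forall x, g s' / h s' * h x <= g x}.
Proof.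
move=> sl hs_gt0 g_ge0; have s_idx : (index s l < size l)%N by rewrite index_mem.
case: (@arg_minP _ _ _ (Ordinal s_idx) (fun k => 0 < h (nth s l k))
                 (fun k => g (nth s l k) / h (nth s l k))); first by rewrite /= nth_index.
move=> k /= hk_gt0 k_min; have kl : nth s l k \in l by rewrite mem_nth.
exists (nth s l k) => //; split=> // x xl; have [hx_gt0|hx_le0] := ltrP 0 (h x).
  have x_idx : (index x l < size l)%N by rewrite index_mem.
  have := k_min (Ordinal x_idx); rewrite /= nth_index // => /(_ hx_gt0).
  by rewrite ler_pdivlMr.
apply: le_trans (g_ge0 x xl); apply: mulr_ge0_le0 hx_le0.
exact: divr_ge0 (g_ge0 _ kl) (ltW hk_gt0).
Qed.

Section NewtonPolyhedron.
Variables (R : realFieldType) (n : nat) (S : seq 'rV[nat]_n).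
Local Notation D := (@newton_polyhedron R n S).
Implicit Types (x y xi eta : 'rV[R]_n).

Definition real_pt (s : 'rV[nat]_n) : 'rV[R]_n := map_mx (fun k => k%:R) s.

Lemma real_pt_ge0 s : nonnegv (real_pt s).
Proof. by move=> i; rewrite mxE ler0n. Qed.

Lemma newton_ge0 y : D y -> nonnegv y.
Proof.
case=> m [p [w [Sp [w_ge0 [_ ->]]]]] i; rewrite summxE; apply: sumr_ge0 => k _.
rewrite mxE mulr_ge0 //; case: (Sp k) => s _ /(_ i); apply: le_trans.
by rewrite ler0n.
Qed.

Lemma newton_real_pt s : s \in S -> D (real_pt s).
Proof.
move=> sS; exists 1%N, (fun=> real_pt s), (fun=> 1).
split; first by move=> _; exists s => // i; rewrite mxE.
by split=> [_|]; rewrite ?ler01 // !big_ord1 scale1r.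
Qed.

Lemma newton_up y x : D y -> (forall i, y 0 i <= x 0 i) -> D x.
Proof.
case=> m [p [w [Sp [w_ge0 [w_sum1 ->]]]]] le_yx.
exists m, (fun k => p k + (x - \sum_(k < m) w k *: p k)), w.
split=> [k|]; last split=> //; last split=> //.
  case: (Sp k) => s sS le_sp; exists s => // i; apply: le_trans (le_sp i) _.
  by rewrite !mxE lerDl subr_ge0 le_yx.
under eq_bigr => k _ do rewrite scalerDr.
by rewrite big_split /= -scaler_suml w_sum1 scale1r addrC subrK.
Qed.

Lemma newton_dotp_lb xi c y : nonnegv xi ->
  (forall s, s \in S -> c <= dotp xi (real_pt s)) -> D y -> c <= dotp xi y.
Proof.
move=> xi_ge0 c_lb [m [p [w [Sp [w_ge0 [w_sum1 ->]]]]]].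
rewrite linear_sum -[c]mul1r -w_sum1 mulr_suml; apply: ler_sum => k _.
rewrite linearZ /=; apply: ler_wpM2l => //.
case: (Sp k) => s sS le_sp; apply: le_trans (c_lb s sS) _.
by apply: ler_dotp => // i; rewrite mxE.
Qed.

Lemma face_of_dotp xi a y : face_of D xi a -> face_of D xi y -> dotp xi y = dotp xi a.
Proof. by move=> [Da a_min] [Dy y_min]; apply/eqP; rewrite eq_le a_min ?y_min. Qed.

Lemma face_of_eq xi a y : face_of D xi a -> D y -> dotp xi y = dotp xi a ->
  face_of D xi y.
Proof. by move=> [_ a_min] Dy ya; split=> // z Dz; rewrite ya a_min. Qed.

Lemma face_normal_gt0 xi a : nonnegv xi -> face_of D xi a ->
  bounded_set (face_of D xi) -> posv xi.
Proof.
move=> xi_ge0 Fa [M F_bounded] i; have [Da _] := Fa; have a_ge0 := newton_ge0 Da.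
rewrite lt_def xi_ge0 andbT; apply/eqP => xi_i0.
pose y := a + (`|M| + 1) *: delta_mx 0 i.
have Dy : D y.
  by apply: newton_up Da _ => j; rewrite !mxE lerDl mulr_ge0 ?addr_ge0 ?ler0n.
have Fy : face_of D xi y.
  apply: face_of_eq Fa Dy _.
  by rewrite linearD linearZ /= dotp_deltar xi_i0 mulr0 addr0.
have := F_bounded y Fy i; rewrite !mxE !eqxx mulr1 ger0_norm ?addr_ge0 //.
have := a_ge0 i; have := ler_norm M; lra.
Qed.

Lemma face_bounded xi a : posv xi -> face_of D xi a -> bounded_set (face_of D xi).
Proof.
move=> xi_gt0 Fa; have xi_ge0 : nonnegv xi by move=> k; apply: ltW.
exists (\sum_k dotp xi a / xi 0 k) => y Fy i; have [Dy _] := Fy.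
have y_ge0 := newton_ge0 Dy.
have term_ge0 k : 0 <= dotp xi a / xi 0 k.
  by rewrite divr_ge0 // -(face_of_dotp Fa Fy) dotp_ge0.
rewrite ger0_norm // (bigD1 i) //= -[y 0 i]addr0 lerD ?sumr_ge0 //.
rewrite ler_pdivlMr // mulrC -(face_of_dotp Fa Fy) /dotp (bigD1 i) //= lerDl.
by apply: sumr_ge0 => k _; rewrite mulr_ge0.
Qed.

Lemma face_tilt xi eta c a s : nonnegv xi -> nonnegv eta -> face_of D xi a ->
    (forall y, face_of D xi y -> dotp eta y = c) ->
    s \in S -> dotp eta (real_pt s) < c ->
  exists2 q, 0 <= q & exists2 s', s' \in S &
    [/\ forall y, face_of D xi y -> face_of D (xi + q *: eta) y,
        face_of D (xi + q *: eta) (real_pt s')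
      & dotp xi a < dotp xi (real_pt s')].
Proof.
move=> xi_ge0 eta_ge0 Fa eta_F sS s_below; have [Da a_min] := Fa.
pose g u := dotp xi (real_pt u) - dotp xi a.
pose h u := c - dotp eta (real_pt u).
have g_ge0 s1 : s1 \in S -> 0 <= g s1.
  by move=> s1S; rewrite /g subr_ge0; apply/a_min/newton_real_pt.
have hs_gt0 : 0 < h s by rewrite subr_gt0.
have g0_h0 s1 : s1 \in S -> g s1 = 0 -> h s1 = 0.
  move=> s1S /eqP; rewrite subr_eq0 => /eqP g0; apply/eqP; rewrite subr_eq0 eq_sym.
  by rewrite eta_F //; apply: face_of_eq Fa (newton_real_pt s1S) g0.
(* The steepest tilt keeping all of S above the tilted level [dotp xi a + q * c]. *)
have [s' s'S [h_gt0 s'_min]] := seq_min_ratio (h := h) sS hs_gt0 g_ge0.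
set q := g s' / h s'; have q_ge0 : 0 <= q by rewrite divr_ge0 ?g_ge0 ?ltW.
have dotp_tilt y : dotp (xi + q *: eta) y = dotp xi y + q * dotp eta y.
  by rewrite dotpDl dotpZl.
have tilt_lb y : D y -> dotp xi a + q * c <= dotp (xi + q *: eta) y.
  move=> Dy; apply: newton_dotp_lb Dy => [i|s1 s1S].
    by rewrite !mxE; apply: addr_ge0 (xi_ge0 i) (mulr_ge0 q_ge0 (eta_ge0 i)).
  by move: (s'_min s1 s1S); rewrite -/q dotp_tilt /g /h; lra.
have F'_eq y : D y -> dotp (xi + q *: eta) y = dotp xi a + q * c ->
    face_of D (xi + q *: eta) y.
  by move=> Dy y_eq; split=> // z Dz; rewrite y_eq tilt_lb.
exists q => //; exists s' => //; split.
- move=> y Fy; apply: F'_eq; first by case: Fy.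
  by rewrite dotp_tilt (face_of_dotp Fa Fy) eta_F.
- apply: F'_eq; first exact: newton_real_pt.
  have qh : q * h s' = g s' by rewrite divfK ?gt_eqF.
  by rewrite dotp_tilt; move: qh; rewrite /g /h; lra.
- rewrite -subr_gt0 lt_def g_ge0 // andbT; apply/eqP => /(g0_h0 _ s'S) h0.
  by move: h_gt0; rewrite h0 ltxx.
Qed.

End NewtonPolyhedron.
Arguments real_pt {R n} s.
Arguments real_pt_ge0 {R n} s.

Section LooseEdge.
Variables (R : realFieldType) (n : nat) (S : seq 'rV[nat]_n).
Local Notation D := (@newton_polyhedron R n S).
Variables (E : 'rV[R]_n -> Prop) (xi a b : 'rV[R]_n).
Hypothesis xi_gt0 : posv xi.
Hypothesis E_face : forall x, E x <-> face_of D xi x.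
Hypothesis Eab : has_endpoints E a b.
Hypothesis ab_disjoint : forall i, a 0 i * b 0 i = 0.

Let Fa : face_of D xi a := proj1 (E_face a) (has_endpoints_left Eab).
Let Fb : face_of D xi b := proj1 (E_face b) (has_endpoints_left (has_endpointsC Eab)).
Let xi_ge0 : nonnegv xi := fun i => ltW (xi_gt0 i).
Let a_ge0 : nonnegv a := newton_ge0 Fa.1.
Let b_ge0 : nonnegv b := newton_ge0 Fb.1.

Lemma endpoint_is_vertex : is_vertex D a.
Proof.
have [a_neq_b E_seg] := Eab; have [Da a_min] := Fa.
have ba0 : dotp b a = 0 by apply: big1 => i _; rewrite mulrC ab_disjoint.
have b_neq0 : b != 0.
  apply: contraNneq a_neq_b => b0; apply/eqP; rewrite b0.
  by apply: dotp_eq0 xi_gt0 a_ge0 _; rewrite (face_of_dotp Fb Fa) b0 linear0.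
exists (fun x => x = a); split; last exact: conj (affdim_eq0_singleton a) erefl.
exists (xi + b); split=> [i|y]; first by rewrite mxE addr_ge0.
split=> [->|[Dy y_min]].
  split=> // z Dz; rewrite !dotpDl ba0 addr0.
  rewrite -[dotp xi a]addr0; exact: lerD (a_min z Dz) (dotp_ge0 b_ge0 (newton_ge0 Dz)).
have := y_min a Da; rewrite !dotpDl ba0 addr0 => y_le_a.
have := a_min y Dy; have := dotp_ge0 b_ge0 (newton_ge0 Dy) => by_ge0 a_le_y.
have /E_seg[t _ y_eq] : E y by apply/E_face/(face_of_eq Fa Dy); lra.
have : t * dotp b b = 0.
  have by0 : dotp b y = 0 by lra.
  by move: by0; rewrite y_eq linearD !linearZ /= ba0 mulr0 add0r.
move/eqP; rewrite mulf_eq0 (gt_eqF (dotpp_gt0 b_neq0)) orbF => /eqP t0.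
by rewrite y_eq t0 subr0 scale1r scale0r addr0.
Qed.

Hypothesis E_loose :
  forall G, is_compact_face D G -> affdim_ge G 2 -> ~ (forall x, E x -> G x).

Lemma loose_edge_cross_bound i j s : s \in S -> 0 < a 0 i -> 0 < b 0 j ->
  a 0 i * b 0 j <= b 0 j * real_pt s 0 i + a 0 i * real_pt s 0 j.
Proof.
move=> sS ai_gt0 bj_gt0; rewrite leNgt; apply/negP => s_below.
have [a_neq_b E_seg] := Eab.
have aj0 : a 0 j = 0.
  by have /eqP := ab_disjoint j; rewrite mulf_eq0 (gt_eqF bj_gt0) orbF => /eqP.
have bi0 : b 0 i = 0.
  by have /eqP := ab_disjoint i; rewrite mulf_eq0 (gt_eqF ai_gt0) => /eqP.
pose eta : 'rV[R]_n := b 0 j *: delta_mx 0 i + a 0 i *: delta_mx 0 j.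
have dotp_eta x : dotp eta x = b 0 j * x 0 i + a 0 i * x 0 j.
  by rewrite dotpDl !dotpZl !dotp_deltal.
have eta_ge0 : nonnegv eta.
  by move=> k; rewrite !mxE addr_ge0 // mulr_ge0 ?ler0n ?ltW.
have eta_E y : face_of D xi y -> dotp eta y = a 0 i * b 0 j.
  move=> /E_face/E_seg[t _ ->]; rewrite linearD !linearZ /= !dotp_eta aj0 bi0.
  by rewrite !mulr0 addr0 add0r (mulrC (b 0 j)) -mulrDl subrK mul1r.
have s_eta : dotp eta (real_pt s) < a 0 i * b 0 j by rewrite dotp_eta.
have [q q_ge0 [s' s'S [E_G Gs' a_lt_s']]] := face_tilt xi_ge0 eta_ge0 Fa eta_E sS s_eta.
set G := face_of D (xi + q *: eta); have Ga := E_G a Fa.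
have G_gt0 : posv (xi + q *: eta).
  by move=> k; rewrite mxE [(q *: eta) 0 k]mxE ltr_wpDr // mulr_ge0.
apply: (E_loose (G := G)) => [|| x /E_face /E_G //].
  split; last exact: face_bounded G_gt0 Ga.
  by exists (xi + q *: eta); split=> // k; apply: ltW.
apply: affdim_ge2_separated Ga (E_G b Fb) Gs' a_neq_b _ _.
  exact: esym (face_of_dotp Fa Fb).
by rewrite lt_eqF.
Qed.

Lemma newton_pt_above_edge s : s \in S -> exists2 t, 0 <= t <= 1 &
  forall i, ((1 - t) *: a + t *: b) 0 i <= real_pt s 0 i.
Proof.
move=> sS; have s_ge0 : nonnegv (real_pt s : 'rV[R]_n) := real_pt_ge0 s.
pose t := \big[Num.min/1]_(j | 0 < b 0 j) (real_pt s 0 j / b 0 j).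
have t_le j : 0 < b 0 j -> t <= real_pt s 0 j / b 0 j by move=> ?; apply: bigmin_le_cond.
have t_cases : t = 1 \/ exists2 j, 0 < b 0 j & t = real_pt s 0 j / b 0 j.
  apply: (big_ind (fun u => u = 1 \/ exists2 j, 0 < b 0 j & u = real_pt s 0 j / b 0 j)).
  - by left.
  - by move=> u v u_cases v_cases; case: (leP u v).
  - by move=> j bj_gt0; right; exists j.
exists t.
  rewrite /t bigmin_le_id andbT; apply: le_bigmin => [|j bj_gt0]; first exact: ler01.
  exact: divr_ge0 (s_ge0 j) (ltW bj_gt0).
move=> i; rewrite 3!mxE; have [bi_gt0|bi_le0] := ltrP 0 (b 0 i).
  have ai0 : a 0 i = 0.
    by have /eqP := ab_disjoint i; rewrite mulf_eq0 (gt_eqF bi_gt0) orbF => /eqP.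
  by rewrite ai0 mulr0 add0r -ler_pdivlMr // t_le.
have bi0 : b 0 i = 0 by apply/eqP; rewrite eq_le bi_le0 b_ge0.
rewrite bi0 mulr0 addr0; case: t_cases => [->|[j bj_gt0 t_eq]].
  by rewrite subrr mul0r.
have [ai_gt0|ai_le0] := ltrP 0 (a 0 i); last first.
  have ai0 : a 0 i = 0 by apply/eqP; rewrite eq_le ai_le0 a_ge0.
  by rewrite ai0 mulr0.
have := loose_edge_cross_bound sS ai_gt0 bj_gt0.
have -> : real_pt s 0 j = t * b 0 j by rewrite t_eq divfK ?gt_eqF.
move=> cross; rewrite -(ler_pM2l bj_gt0).
have -> : b 0 j * ((1 - t) * a 0 i) = a 0 i * b 0 j - a 0 i * (t * b 0 j) by ring.
by rewrite lerBlDr.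
Qed.

Lemma face_meets_edge_endpoint zeta : nonnegv zeta ->
  face_of D zeta a \/ face_of D zeta b.
Proof.
move=> zeta_ge0; have [Da _] := Fa; have [Db _] := Fb.
have lb y : D y -> Num.min (dotp zeta a) (dotp zeta b) <= dotp zeta y.
  apply: newton_dotp_lb => // s sS; have [t /andP[t_ge0 t_le1] le_s] := newton_pt_above_edge sS.
  apply: le_trans (ler_dotp zeta_ge0 le_s); rewrite linearD !linearZ /=.
  have : Num.min (dotp zeta a) (dotp zeta b) <= dotp zeta a by rewrite ge_min lexx.
  have : Num.min (dotp zeta a) (dotp zeta b) <= dotp zeta b by rewrite ge_min lexx orbT.
  nra.
case: leP lb => _ lb; [left|right]; split=> // y Dy; exact: lb.
Qed.

End LooseEdge.

Theorem lemma2p2 (R : realFieldType) (n : nat) (S : seq 'rV[nat]_n)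
    (E : 'rV[R]_n -> Prop) (a b : 'rV[R]_n) :
  (0 < size S)%N ->
  is_loose_edge (@newton_polyhedron R n S) E ->
  has_endpoints E a b ->
  (forall i : 'I_n, Num.min (a 0 i) (b 0 i) = 0) ->
  forall v : 'rV[R]_n, is_vertex (@newton_polyhedron R n S) v <-> (v = a \/ v = b).
Proof.
(* Nonemptiness of S is implied by the existence of the edge E. *)
move=> _ [[[xi [xi_ge0 E_face]] _] [E_bounded E_loose]] Eab ab_min v.
have xi_gt0 : posv xi.
  apply: (face_normal_gt0 xi_ge0 (proj1 (E_face a) (has_endpoints_left Eab))).
  by case: E_bounded => M M_bound; exists M => x /E_face /M_bound.
have ab_disjoint i : a 0 i * b 0 i = 0.
  by case: (leP (a 0 i) (b 0 i)) (ab_min i) => _ ->; rewrite ?mul0r ?mulr0.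
split=> [[F [[zeta [zeta_ge0 F_face]] [[_ F_dim] Fv]]] | [->|->]].
- have [Fa|Fb] := face_meets_edge_endpoint xi_gt0 E_face Eab ab_disjoint E_loose zeta_ge0.
    by left; apply: affdim_lt1_eq F_dim Fv _; apply/F_face.
  by right; apply: affdim_lt1_eq F_dim Fv _; apply/F_face.
- exact: endpoint_is_vertex xi_gt0 E_face Eab ab_disjoint.
- apply: endpoint_is_vertex xi_gt0 E_face (has_endpointsC Eab) _ => i.
  by rewrite mulrC.
Qed.
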